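(* Let $\mathrm{Lab}$ be a labelling system on a finite simplicial tree $T$ with index set $\{1,\dots,N\}$, and let $T_{\mathrm{spl}}$ be the union of the useful edges of $T$. If $T_{\mathrm{spl}}$ is nonempty, then $\bigcup_{v\in T_{\mathrm{spl}}}\mathrm{Lab}(v)=\{1,\dots,N\}$, the union being over vertices $v$ of $T_{\mathrm{spl}}$.
   Context: A labelling system on a finite simplicial tree $T$ assigns to each vertex $v$ a subset $\mathrm{Lab}(v)\subset\{1,\dots,N\}$ such that (A) $\mathrm{Lab}(a)\cap\mathrm{Lab}(b)\subset\mathrm{Lab}(x)$ whenever $x$ is a vertex on the shortest path between vertices $a,b$, and (B) $\bigcup_v\mathrm{Lab}(v)=\{1,\dots,N\}$. Removing the open edge $e$ leaves two closed connected components $T^+(e)$, $T^-(e)$. The edge $e$ is useless if $\bigcup_{v\in T^+(e)}\mathrm{Lab}(v)$ or $\bigcup_{v\in T^-(e)}\mathrm{Lab}(v)$ equals $\{1,\dots,N\}$, and useful otherwise. *)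

From mathcomp Require Import all_boot.
Set Implicit Arguments. Unset Strict Implicit. Unset Printing Implicit Defensive.

Definition is_tree (V : finType) (e : rel V) : Prop :=
  [/\ symmetric e, irreflexive e &
      forall a b : V, exists! p : seq V,
        [&& path e a p, last a p == b & uniq (a :: p)]].

(* Labelling system with index set 'I_N (standing for {1,...,N}).
   (A): for the (unique, hence shortest) simple path a :: p from a to b and
        any vertex x on it, Lab a :&: Lab b \subset Lab x.
   (B): the labels cover everything. *)
Definition labelling_system (N : nat) (V : finType) (e : rel V)
    (Lab : V -> {set 'I_N}) : Prop :=
  (forall (a b x : V) (p : seq V),
      path e a p -> last a p = b -> uniq (a :: p) -> x \in a :: p ->
      Lab a :&: Lab b \subset Lab x)
  /\ \bigcup_(v : V) Lab v = [set: 'I_N].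

Definition rel_minus_edge (V : finType) (e : rel V) (u v : V) : rel V :=
  fun x y => e x y && ~~ (((x == u) && (y == v)) || ((x == v) && (y == u))).

Definition side (V : finType) (e : rel V) (u v : V) : {set V} :=
  [set w | connect (rel_minus_edge e u v) u w].

Definition useful (N : nat) (V : finType) (e : rel V) (Lab : V -> {set 'I_N})
    (u v : V) : bool :=
  [&& e u v,
      \bigcup_(w in side e u v) Lab w != [set: 'I_N] &
      \bigcup_(w in side e v u) Lab w != [set: 'I_N]].

Definition Tspl (N : nat) (V : finType) (e : rel V) (Lab : V -> {set 'I_N}) :
    {set V} :=
  [set v | [exists u, useful e Lab u v || useful e Lab v u]].

From mathcomp Require Import all_boot.
Set Implicit Arguments. Unset Strict Implicit.

(* Fix a useful edge {s,t} and a label i, carried by some vertex w.  Orient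
   the edge so that the simple path from s to w avoids t, and walk along it
   from s.  If s carries i we are done.  Otherwise let {y,z} be the first edge
   of the walk where y lacks i and z carries i; this edge is useful:
   - the side of y in T - {y,z} misses i, since a vertex x there carrying i
     would be joined to z by a simple path through y, and axiom (A) would put
     i into Lab y;
   - the side of z in T - {y,z} lies inside the side of s in T - {s,t}, which
     does not carry all labels because {s,t} is useful. *)

Lemma first_crossing (T : Type) (P : pred T) (x : T) (q : seq T) :
  P (last x q) ->
  P x \/ exists p1 z p2, [/\ q = p1 ++ z :: p2, P z & ~~ P (last x p1)].
Proof.
elim: q x => [|y q IH] x /=; first by left.
move=> /IH [Py|[p1 [z [p2 [-> Pz Pl]]]]]; case Px: (P x); auto.
- by right; exists [::], y, q; rewrite Px.
- by right; exists (y :: p1), z, p2.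
Qed.

Section TreeEdges.

Variables (V : finType) (e : rel V).

Lemma rel_minus_edge_sub (a b : V) : subrel (rel_minus_edge e a b) e.
Proof. by move=> x y /andP[]. Qed.

Lemma path_minus_edge (a b c x : V) (p : seq V) :
  (c == a) || (c == b) -> path e x p -> c \notin x :: p ->
  path (rel_minus_edge e a b) x p.
Proof.
move=> c_end; elim: p x => [//|y p IH] x /= /andP[exy pp].
rewrite !inE !negb_or => /and3P[cx cy cp].
rewrite IH ?pp ?inE ?negb_or ?cy ?cp // andbT /rel_minus_edge exy /=.
by case/orP: c_end => /eqP <-;
  rewrite !(eq_sym x) !(eq_sym y) (negbTE cx) (negbTE cy) ?andbF.
Qed.

Hypothesis tree_e : is_tree e.

(* In a tree, removing an edge {a,b} separates a from b: a path from a to b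
   avoiding the edge would give a second simple path besides [:: b]. *)
Lemma minus_edge_separates (a b : V) :
  e a b -> ~~ connect (rel_minus_edge e a b) a b.
Proof.
case: tree_e => _ e_irr uniq_path eab; apply/negP => /connectP[p pp lp].
case/shortenP: pp lp => p' pp' up' _ lp.
have [q [_ q_unique]] := uniq_path a b.
have a_neq_b : a != b by apply: contraTneq eab => ->; rewrite e_irr.
have p'_eq : p' = [:: b].
  have <- : q = [:: b].
    by apply: q_unique; rewrite /= eab eqxx /= inE a_neq_b.
  by apply/esym/q_unique; rewrite (sub_path (@rel_minus_edge_sub a b) pp') -lp eqxx up'.
by move: pp'; rewrite p'_eq /= /rel_minus_edge eab !eqxx.
Qed.

Lemma side_nested (s t y z : V) (p : seq V) :
  path e s p -> last s p = y -> e y z -> z \notin s :: p ->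
  t \notin s :: rcons p z -> side e z y \subset side e s t.
Proof.
case: (tree_e) => e_sym _ _ pp lp eyz zn tn.
apply/subsetP => x; rewrite !inE => /connectP[r pr ->].
have path_sz : path e s (rcons p z) by rewrite rcons_path pp lp eyz.
have s_to_z : connect (rel_minus_edge e s t) s z.
  apply/connectP; exists (rcons p z); last by rewrite last_rcons.
  by apply: (path_minus_edge _ path_sz tn); rewrite eqxx orbT.
apply: connect_trans s_to_z _; case s_in_r: (s \in z :: r).
  have z_to_s := path_connect pr s_in_r.
  have s_to_y : connect (rel_minus_edge e z y) s y.
    apply/connectP; exists p => //.
    by apply: (path_minus_edge _ pp zn); rewrite eqxx.
  have := @minus_edge_separates z y; rewrite e_sym eyz.
  by rewrite (connect_trans z_to_s s_to_y) => /(_ isT).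
apply/connectP; exists r => //.
apply: (@path_minus_edge s t s) (sub_path (@rel_minus_edge_sub z y) pr) _;
  by rewrite ?s_in_r ?eqxx.
Qed.

End TreeEdges.

Section UsefulEdges.

Variables (N : nat) (V : finType) (e : rel V) (Lab : V -> {set 'I_N}).

Lemma useful_Tspl_l (u v : V) : useful e Lab u v -> u \in Tspl e Lab.
Proof. by move=> h; rewrite inE; apply/existsP; exists v; rewrite h orbT. Qed.

Lemma useful_Tspl_r (u v : V) : useful e Lab u v -> v \in Tspl e Lab.
Proof. by move=> h; rewrite inE; apply/existsP; exists u; rewrite h. Qed.

Lemma useful_sym (u v : V) :
  symmetric e -> useful e Lab u v -> useful e Lab v u.
Proof. by move=> e_sym /and3P[euv Hu Hv]; rewrite /useful e_sym euv Hu Hv. Qed.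

Hypothesis tree_e : is_tree e.

(* Every vertex w is reached by a simple walk that starts at an endpoint s
   of a useful edge {s,t} and never visits t: take the simple path from u to
   w, and if it passes through v, keep only its part from v on. *)
Lemma walk_from_useful_edge (u v w : V) : useful e Lab u v ->
  exists s t q, [/\ useful e Lab s t, path e s q, last s q = w,
                    uniq (s :: q) & t \notin s :: q].
Proof.
case: (tree_e) => e_sym e_irr uniq_path uv_useful.
have [q [/and3P[pq /eqP lq uq] _]] := uniq_path u w.
have u_neq_v : u != v.
  by apply: contraTneq uv_useful => ->; rewrite /useful e_irr.
case v_in_q: (v \in u :: q); last by exists u, v, q; rewrite v_in_q.
move: v_in_q pq lq uq; rewrite inE eq_sym (negbTE u_neq_v) /=.
case/splitPr=> q1 q2; rewrite cat_path last_cat /= => /andP[_ /andP[_ pq2]] lq.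
rewrite cat_uniq mem_cat negb_or => /andP[/andP[_ u_notin_vq2] /and3P[_ _ uq2]].
by exists v, u, q2; split=> //; apply: useful_sym.
Qed.

Hypothesis labelling : labelling_system e Lab.

(* If z carries i but its neighbour y does not, then no vertex on the side of
   y in T - {y,z} carries i: the simple path from z to such a vertex passes
   through y, and axiom (A) would force i into Lab y. *)
Lemma side_misses_label (y z : V) (i : 'I_N) :
  e y z -> i \in Lab z -> i \notin Lab y ->
  \bigcup_(w in side e y z) Lab w != [set: 'I_N].
Proof.
case: (tree_e) => e_sym _ _ eyz iz iy; apply/negP => /eqP full.
have : i \in [set: 'I_N] by rewrite inE.
rewrite -full => /bigcupP[x]; rewrite inE => /connectP[r pr lr] ix.
case/shortenP: pr lr => r' pr' ur' _ lr.
case z_in_r: (z \in y :: r').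
  by move: (minus_edge_separates tree_e eyz); rewrite (path_connect pr' z_in_r).
have path_zx : path e z (y :: r').
  by rewrite /= e_sym eyz (sub_path (@rel_minus_edge_sub _ e y z) pr').
have uniq_zx : uniq (z :: y :: r') by rewrite /= z_in_r.
have y_on_zx : y \in z :: y :: r' by rewrite !inE eqxx orbT.
have /subsetP Lab_zx := labelling.1 z x y _ path_zx (esym lr) uniq_zx y_on_zx.
by move: iy; rewrite Lab_zx // inE iz ix.
Qed.

Lemma crossing_edge_useful (s t y z : V) (p : seq V) (i : 'I_N) :
  useful e Lab s t -> path e s p -> last s p = y -> e y z ->
  z \notin s :: p -> t \notin s :: rcons p z ->
  i \in Lab z -> i \notin Lab y -> useful e Lab y z.
Proof.
move=> /and3P[_ st_not_full _] pp lp eyz zn tn iz iy.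
rewrite /useful eyz (side_misses_label eyz iz iy) /=; apply: contra st_not_full.
rewrite !eqEsubset !subsetT /= => /subset_trans; apply.
apply/bigcupsP => x x_side; apply: (bigcup_sup x).
exact: subsetP (side_nested tree_e pp lp eyz zn tn) x x_side.
Qed.

Lemma walk_reaches_Tspl (s t : V) (q : seq V) (i : 'I_N) :
  useful e Lab s t -> path e s q -> uniq (s :: q) -> t \notin s :: q ->
  i \in Lab (last s q) -> exists2 z, z \in Tspl e Lab & i \in Lab z.
Proof.
move=> st_useful pq uq tn /(@first_crossing _ (fun x => i \in Lab x)).
case=> [i_s | [p1 [z [p2 [q_eq iz iy]]]]]; first by exists s => //;
  apply: useful_Tspl_l st_useful.
exists z => //; apply: useful_Tspl_r (last s p1) _ _.
move: pq uq tn; rewrite q_eq cat_path -cat_cons cat_uniq => /andP[pp1 /= /andP[eyz _]].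
move=> /and3P[_ /norP[zn _] _] tn.
apply: crossing_edge_useful st_useful pp1 erefl eyz zn _ iz iy.
apply: contra tn; rewrite -cats1 -cat_cons -[s :: p1 ++ _]cat_cons !mem_cat.
by rewrite mem_seq1 => /orP[-> // | /eqP->]; rewrite mem_head orbT.
Qed.

End UsefulEdges.

Theorem mainTheorem12 (N : nat) (V : finType) (e : rel V)
    (Lab : V -> {set 'I_N}) :
  is_tree e -> labelling_system e Lab ->
  Tspl e Lab != set0 ->
  \bigcup_(v in Tspl e Lab) Lab v = [set: 'I_N].
Proof.
move=> tree_e labelling /set0Pn[v0]; rewrite inE => /existsP[u0 useful0].
have [u [v uv_useful]] : exists u v, useful e Lab u v.
  by case/orP: useful0 => h; [exists u0, v0 | exists v0, u0].
apply/setP => i; rewrite inE; apply/bigcupP.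
have : i \in [set: 'I_N] by rewrite inE.
rewrite -labelling.2 => /bigcupP[w _ iw].
have [s [t [q [st_useful pq lq uq tn]]]] :=
  walk_from_useful_edge tree_e w uv_useful.
have i_at_end : i \in Lab (last s q) by rewrite lq.
have [z z_spl iz] := walk_reaches_Tspl tree_e labelling st_useful pq uq tn i_at_end.
by exists z.
Qed.
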